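(* Let $q=\{q_n\}_{n\geq1}$ be a system of Beurling primes with Beurling integers $\{\nu_n\}_{n\geq1}$, such that $\sigma_c(\zeta_q)<\infty$ and there are constants $c>0$, $C>0$ with $\nu_{n+1}-\nu_n\geq c\,\nu_{n+1}^{-C}$ for all $n\in\mathbb{N}$. Then for every $\varepsilon>0$ and for almost every $q'>1$, the set $q\cup\{q'\}$ is a system of Beurling primes whose Beurling integers $\{\nu'_n\}_{n\geq1}$ satisfy, for some constant $c'>0$ (depending on $q'$ and $q$), $$\nu'_{n+1}-\nu'_n\geq c'\,(\nu'_{n+1})^{-C'},\qquad n\in\mathbb{N},$$ where $C'=\max\bigl(C,\,2\sigma_c(\zeta_q)-1+\varepsilon\bigr)$.
   Context: A system of Beurling primes is an increasing sequence (finite or infinite) $q=\{q_n\}$ of real numbers with $q_n>1$ (and $q_n\to\infty$ if infinite) such that $\{\log q_n\}$ is linearly independent over $\mathbb{Q}$. The Beurling integers $\mathbb{N}_q=\{\nu_n\}_{n\geq1}$ are all finite products of elements of $q$ (including $\nu_1=1$), listed in increasing order. The Beurling zeta function is $\zeta_q(s)=\sum_{n\geq1}\nu_n^{-s}=\prod_{n}(1-q_n^{-s})^{-1}$, and $\sigma_c(\zeta_q)$ denotes the abscissa of convergence of this Dirichlet series. *)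

From HB Require Import structures.
From mathcomp Require Import all_boot all_order all_algebra.
From mathcomp Require Import all_classical all_reals all_analysis.
Set Implicit Arguments. Unset Strict Implicit. Unset Printing Implicit Defensive.
Import Order.TTheory GRing.Theory Num.Theory.
Local Open Scope classical_set_scope.
Local Open Scope ring_scope.

Section Beurling.
Variable R : realType.

(* A system of Beurling primes, represented by its set of elements Q:
   all elements > 1; only finitely many elements below any bound
   (= an increasing sequence that is finite, or infinite tending to oo);
   the logarithms are linearly independent over the rationals. *)
Definition beurling_system (Q : set R) : Prop :=
  [/\ (forall p, Q p -> 1 < p),
      (forall x : R, finite_set (Q `&` `]-oo, x]))
    & (forall (s : seq R) (r : R -> rat),
         uniq s -> (forall p, p \in s -> Q p) ->
         \sum_(p <- s) (ratr (r p) * ln p) = 0 ->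
         forall p, p \in s -> r p = 0)].

Definition beurling_integers (Q : set R) : set R :=
  [set x | exists s : seq R, (forall p, p \in s -> Q p) /\ x = \prod_(p <- s) p].

(* Abscissa of convergence of zeta_Q(s) = sum_n nu_n^{-s}; the terms are
   positive, so convergence of the Dirichlet series at real s is the
   finiteness of the (unordered) sum. *)
Definition sigma_c (Q : set R) : \bar R :=
  ereal_inf [set (s%:E) | s in
    [set s : R | (\esum_(x in beurling_integers Q) ((x `^ (- s))%:E) < +oo)%E]].

Definition gap_condition (Q : set R) (c C : R) : Prop :=
  forall x y, beurling_integers Q x -> beurling_integers Q y -> x < y ->
    (forall z, beurling_integers Q z -> ~ (x < z /\ z < y)) ->
    c * y `^ (- C) <= y - x.

End Beurling.

From HB Require Import structures.
From mathcomp Require Import all_boot all_order all_algebra.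
From mathcomp Require Import all_classical all_reals all_analysis.
From mathcomp Require Import ring lra.
Import Order.TTheory GRing.Theory Num.Theory.
Local Open Scope classical_set_scope.
Local Open Scope ring_scope.
Set Implicit Arguments. Unset Strict Implicit.
(* Adjoining [q] keeps the logarithms linearly independent unless [ln q] is a
   rational combination of the [ln p], which happens for countably many [q] only.
   The new integers are the [nu q^k]; two of them carrying the same power of [q]
   inherit the old gap condition, while for different powers their distance is
   [q^k |nu q^(m+1) - mu|].  So it suffices that [q] be badly approximable:
   [|nu q^(m+1) - mu| >= c0 mu^(-C')].  On a window [[a, a^2]] the [q] violating
   this with [c0 = 1/(N+1)] lie in intervals of total length
   [O(zeta((C'+1)/2)^2 / (N+1))], which is finite since [(C'+1)/2 > sigma_c];
   letting [N] grow, the remaining [q] form a null set. *)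

Section esum_bounds.
Variable R : realType.
Local Open Scope ereal_scope.

Lemma esumZl_le (T : choiceType) (I : set T) (a : T -> \bar R) (k : R) :
  (0 <= k)%R -> (forall i, I i -> 0 <= a i) ->
  \esum_(i in I) (k%:E * a i) <= k%:E * \esum_(i in I) a i.
Proof.
move=> k0 a0; apply: ge_ereal_sup => _ [X [finX XI] <-].
have := @esum_ge _ _ I a (\sum_(i \in X) a i).
move=> /(_ (ex_intro2 _ _ X (conj finX XI) (lexx _))) le_sum.
rewrite fsbig_finite// big_seq -ge0_sume_distrr; last first.
  by move=> i; rewrite in_fset_set// inE => /XI /a0.
by apply: lee_wpmul2l; rewrite ?lee_fin// -big_seq -fsbig_finite.
Qed.

Lemma esum_geometric_le (r : R) : (0 < r < 1)%R ->
  \esum_(i in [set: nat]) (r ^+ i)%:E <= ((1 - r)^-1)%:E.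
Proof.
move=> /andP[r0 r1]; have r_ge0 n : 0 <= (r ^+ n)%:E by rewrite lee_fin exprn_ge0// ltW.
rewrite -nneseries_esumT//; apply: lime_le; first exact: is_cvg_nneseries.
apply: nearW => n; rewrite sumEFin lee_fin.
have := @geometric_le_lim R n 1 r ler01 r0; rewrite gtr0_norm// => /(_ r1).
by rewrite /series /= mul1r; under eq_bigr do rewrite mul1r.
Qed.

End esum_bounds.

Lemma countable_seq_in (T : eqType) (A : set T) : countable A ->
  countable [set s : seq T | forall x, x \in s -> A x].
Proof.
move=> /countable_injP[f injf]; apply/countable_injP.
exists (fun s => pickle (map f s)) => s t; rewrite !inE /= => sA tA.
move=> /(pcan_inj pickleK); elim: s t sA tA => [|x s IH] [|y t]//= sA tA [fxy fst].
rewrite (injf x y) ?inE; [|by apply: sA; rewrite mem_head|by apply: tA; rewrite mem_head|by []].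
congr (_ :: _); apply: IH => // z zs; [apply: sA|apply: tA]; by rewrite inE zs orbT.
Qed.

Lemma countable_image (T U : Type) (A : set T) (f : T -> U) :
  countable A -> countable (f @` A).
Proof. exact/sub_countable/card_image_le. Qed.

Section countable_bigcup.
Context d (T : measurableType d) (R : realType) (mu : {measure set T -> \bar R}).

(* Transport along an injection into nat, so that sigma-subadditivity applies. *)
Lemma measure_countable_bigcup (U : choiceType) (I : set U) (F : U -> set T) :
  countable I -> (forall i, I i -> measurable (F i)) ->
  measurable (\bigcup_(i in I) F i) /\
  (mu (\bigcup_(i in I) F i) <= \esum_(i in I) mu (F i))%E.
Proof.
move=> cI mF.
have [[t0 It0]|nI] := pselect (exists t, I t); last first.
  have -> : I = set0 by apply/seteqP; split => // t It; apply: nI; exists t.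
  by rewrite bigcup_set0 measure0 esum_set0; split.
move/countable_injP: cI => [f injf].
pose P n := [set i | I i /\ f i = n].
pose G n := if pselect (exists i, P n i) is left _ then F (xget t0 (P n)) else set0.
have PG n : (exists i, P n i) -> P n (xget t0 (P n)) by move=> e; apply: xgetPex.
have GE i : I i -> G (f i) = F i.
  move=> Ii; rewrite /G; case: pselect => [e|]; last by move=> []; exists i.
  have [Ix fx] := PG _ e; congr F; apply: injf; rewrite ?inE//.
have mG n : measurable (G n).
  by rewrite /G; case: pselect => // e; apply: mF; exact: (PG _ e).1.
have -> : \bigcup_(i in I) F i = \bigcup_n G n.
  apply/seteqP; split => [x [i Ii Fix]|x [n _]]; first by exists (f i) => //; rewrite GE.
  rewrite /G; case: pselect => // e Gx; exists (xget t0 (P n)) => //.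
  exact: (PG _ e).1.
split; first exact: bigcupT_measurable.
apply: le_trans (measure_sigma_subadditive mu mG (bigcupT_measurable _ mG) (@subset_refl _ _)) _.
rewrite nneseries_esumT//.
have -> : \esum_(i in [set: nat]) mu (G i) =
    \esum_(i in [set: nat]) (if i \in f @` I then mu (G i) else 0%E).
  apply: eq_esum => n _; case: ifPn => // /negP nfI.
  rewrite /G; case: pselect => [[i [Ii fin]]|]; last by rewrite measure0.
  by exfalso; apply: nfI; rewrite inE; exists i.
rewrite -esum_mkcond esum_image; last by move=> i j /[!inE] Ii Ij; apply: injf; rewrite inE.
by apply: le_esum => i Ii; rewrite GE.
Qed.

End countable_bigcup.

Section beurling_integers.
Variables (R : realType) (Q : set R).
Local Notation NQ := (beurling_integers Q).

Lemma beurling_integers1 : NQ 1.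
Proof. by exists [::]; split => //; rewrite big_nil. Qed.

Lemma beurling_integersM x y : NQ x -> NQ y -> NQ (x * y).
Proof.
move=> [s [sQ ->]] [t [tQ ->]]; exists (s ++ t); split; last by rewrite big_cat.
by move=> p; rewrite mem_cat => /orP[/sQ|/tQ].
Qed.

Lemma beurling_integers_ge1 x : (forall p, Q p -> 1 < p) -> NQ x -> 1 <= x.
Proof.
move=> Q1 [s [sQ ->]]; rewrite big_seq; apply: (big_ind (fun x => 1 <= x)) => //.
- by move=> u v u1 v1; rewrite -(mulr1 1) ler_pM.
- by move=> p /sQ /Q1 /ltW.
Qed.

Lemma beurling_integersU1P (q x : R) : beurling_integers (Q `|` [set q]) x <->
  exists nu k, NQ nu /\ x = nu * q ^+ k.
Proof.
split=> [[s [sQ ->]]|[nu [k [[s [sQ ->]] ->]]]]; last first.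
  exists (s ++ nseq k q); split.
    by move=> p; rewrite mem_cat => /orP[/sQ|/nseqP[-> _]]; [left|right].
  by rewrite big_cat /= big_nseq; congr (_ * _); elim: k => [|k IH]//=; rewrite -IH exprS.
elim: s sQ => [|p s IH] sQ.
  by exists 1, 0%N; split; [exact: beurling_integers1|rewrite big_nil mulr1].
rewrite big_cons.
have [|nu [k [NQnu ->]]] := IH; first by move=> r rs; apply: sQ; rewrite inE rs orbT.
have [Qp|/= ->] := sQ p (mem_head _ _); last by exists nu, k.+1; split => //; rewrite exprS; ring.
exists (p * nu), k; split; last by rewrite mulrA.
by apply: beurling_integersM => //; exists [:: p]; split;
  [move=> r; rewrite inE => /eqP ->|rewrite big_seq1].
Qed.

Lemma beurling_system_countable : beurling_system Q -> countable Q.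
Proof.
move=> [Q1 Qfin _].
have -> : Q = \bigcup_(n in [set: nat]) (Q `&` `]-oo, n%:R]).
  apply/seteqP; split => [p Qp|p [n _ []]//].
  exists (Num.Def.archi_bound p) => //; split => //=.
  by rewrite in_itv /= ltW// archi_boundP// ltW// (lt_trans _ (Q1 _ Qp)).
by apply: bigcup_countable => // n _; apply: finite_set_countable; apply: Qfin.
Qed.

Lemma beurling_integers_countable : beurling_system Q -> countable NQ.
Proof.
move=> bQ; have -> : NQ =
   (fun s => \prod_(p <- s) p) @` [set s : seq R | forall x, x \in s -> Q x].
  by apply/seteqP; split => [x [s [sQ ->]]|x [s sQ <-]]; exists s.
exact/countable_image/countable_seq_in/beurling_system_countable.
Qed.

End beurling_integers.

Section rational_log_span.
Variables (R : realType) (Q : set R).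

Definition exp_rat_log_span : set R :=
  (fun s : seq (R * rat) => expR (\sum_(pr <- s) ratr pr.2 * ln pr.1)) @`
    [set s : seq (R * rat) | forall x, x \in s -> (Q `*` [set: rat]) x].

Lemma exp_rat_log_span_countable : beurling_system Q -> countable exp_rat_log_span.
Proof.
move=> bQ; apply/countable_image/countable_seq_in.
exact: countableX (beurling_system_countable bQ) (countableP _).
Qed.

Lemma beurling_systemU1 q : beurling_system Q -> 1 < q -> ~ exp_rat_log_span q ->
  beurling_system (Q `|` [set q]).
Proof.
move=> [Q1 Qfin Qind] q1 q_span; split.
- by move=> p [/Q1//|->].
- move=> x; rewrite setIUl finite_setU; split; first exact: Qfin.
  by apply: sub_finite_set (finite_set1 q) => y [].
move=> s r us sQ sum0.
have [/Qind|] := pselect (forall p, p \in s -> Q p); first exact.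
move=> /existsNP[q0 /not_implyP[q0s nQq0]].
have {q0 q0s nQq0} qs : q \in s by case: (sQ _ q0s) => [/nQq0 []|<-].
pose s' := [seq p <- s | p != q].
have s'Q p : p \in s' -> Q p.
  by rewrite mem_filter => /andP[pq /sQ[//|/eqP]]; rewrite (negbTE pq).
have sum_split : \sum_(p <- s) ratr (r p) * ln p =
    ratr (r q) * ln q + \sum_(p <- s') ratr (r p) * ln p.
  by rewrite (bigD1_seq q)//= big_filter.
have [rq0|rqn0] := eqVneq (r q) 0.
  move=> p ps; have [->//|pq] := eqVneq p q.
  apply: (Qind s' r (filter_uniq _ us) s'Q); last by rewrite mem_filter pq.
  by move: sum0; rewrite sum_split rq0 rmorph0 mul0r add0r.
exfalso; apply: q_span; exists [seq (p, - r p / r q) | p <- s'].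
  by move=> x /mapP[p ps' ->]; split => //; exact: s'Q.
have rq0 : ratr (r q) != 0 :> R by rewrite fmorph_eq0.
rewrite big_map /=.
have -> : \sum_(j <- s') ratr (- r j / r q) * ln j =
    - (ratr (r q))^-1 * \sum_(p <- s') ratr (r p) * ln p.
  rewrite mulr_sumr; apply: eq_bigr => p _.
  by rewrite fmorph_div rmorphN /=; field.
have -> : \sum_(p <- s') ratr (r p) * ln p = - (ratr (r q) * ln q).
  by apply/eqP; rewrite -addr_eq0 addrC -sum_split sum0.
by rewrite mulrN mulNr opprK mulrA mulVf// mul1r lnK// posrE (lt_trans _ q1).
Qed.

End rational_log_span.

Lemma powRN_le_base (R : realType) (u v e : R) : 0 < u -> u <= v -> 0 <= e ->
  v `^ (- e) <= u `^ (- e).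
Proof.
move=> u0 uv e0; rewrite !powRN lef_pV2 ?posrE ?powR_gt0 ?(lt_le_trans u0)//.
by apply: ge0_ler_powR => //; rewrite nnegrE ltW// (lt_le_trans u0).
Qed.

Section gap_condition_extension.
Variables (R : realType) (Q : set R).
Local Notation NQ := (beurling_integers Q).

Definition badly_approximable (C' q : R) := exists2 c0 : R, 0 < c0 &
  forall nu mu (m : nat), NQ nu -> NQ mu -> c0 * mu `^ (- C') <= `|nu * q ^+ m.+1 - mu|.

Hypothesis Q_gt1 : forall p, Q p -> 1 < p.
Variables (q d C' : R).
Hypotheses (q_gt1 : 1 < q) (C'_ge0 : 0 <= C').
Hypothesis d_sep : forall nu mu (m : nat), NQ nu -> NQ mu ->
  d * mu `^ (- C') <= `|nu * q ^+ m.+1 - mu|.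

Lemma gap_distinct_powers a b z (k m : nat) : NQ a -> NQ b -> 0 <= d ->
  b * q ^+ k <= z -> d * z `^ (- C') <= `|a * q ^+ (m.+1 + k) - b * q ^+ k|.
Proof.
move=> NQa NQb d0 bz; have q0 : 0 < q by exact: lt_trans q_gt1.
have b0 : 0 < b by apply: lt_le_trans ltr01 (beurling_integers_ge1 Q_gt1 NQb).
have qk1 : 1 <= q ^+ k by rewrite exprn_ege1 ?ltW.
rewrite exprD mulrA -mulrBl normrM [`|q ^+ k|]ger0_norm ?exprn_ge0 ?(ltW q0)//.
apply: le_trans (ler_peMr (normr_ge0 _) qk1).
apply: le_trans (d_sep m NQa NQb); apply: ler_wpM2l => //.
by apply: powRN_le_base => //; apply: le_trans bz; rewrite ler_peMr// ltW.
Qed.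

Lemma gap_conditionU1 c C : 0 < c -> 0 < d -> 0 <= C -> C <= C' ->
  gap_condition Q c C -> gap_condition (Q `|` [set q]) (Num.min c d) C'.
Proof.
move=> c0 d0 C0 CC' gQ x y /beurling_integersU1P[nu [k [NQnu ex]]].
move=> /beurling_integersU1P[mu [j [NQmu ey]]] xy gap_xy.
have q0 : 0 < q by exact: lt_trans q_gt1.
have mu1 := beurling_integers_ge1 Q_gt1 NQmu.
have mu0 : 0 < mu by apply: lt_le_trans mu1.
have mu_le_y : mu <= y by rewrite ey ler_peMr ?exprn_ege1 ?ltW.
have y1 : 1 <= y by apply: le_trans mu_le_y.
rewrite -[y - x]ger0_norm; last by rewrite subr_ge0 ltW.
case: (ltngtP k j) => [kj|jk|kj].
- have [m jE] : exists m, j = (m.+1 + k)%N by exists (j - k.+1)%N; rewrite addSn -addnS subnK.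
  subst j.
  apply: le_trans (_ : d * y `^ (- C') <= _).
    by rewrite ler_wpM2r ?powR_ge0 ?ge_min ?lexx ?orbT.
  rewrite ey ex; apply: gap_distinct_powers => //; first exact: ltW.
  by rewrite -ex -ey ltW.
- have [m kE] : exists m, k = (m.+1 + j)%N by exists (k - j.+1)%N; rewrite addSn -addnS subnK.
  subst k.
  apply: le_trans (_ : d * y `^ (- C') <= _).
    by rewrite ler_wpM2r ?powR_ge0 ?ge_min ?lexx ?orbT.
  by rewrite ey ex distrC; apply: gap_distinct_powers => //; first exact: ltW.
- subst j; have qk0 : 0 < q ^+ k by rewrite exprn_gt0.
  have numu : nu < mu by move: xy; rewrite ex ey ltr_pM2r.
  have gap_numu : c * mu `^ (- C) <= mu - nu.
    apply: gQ => // z NQz [nuz zmu]; apply: (gap_xy (z * q ^+ k)).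
      by apply/beurling_integersU1P; exists z, k.
    by rewrite ex ey !ltr_pM2r.
  apply: le_trans (_ : c * y `^ (- C) <= _).
    apply: le_trans (_ : c * y `^ (- C') <= _).
      by rewrite ler_wpM2r ?powR_ge0 ?ge_min ?lexx.
    by apply: ler_wpM2l; [exact: ltW|rewrite ler_powR// lerN2].
  apply: le_trans (_ : c * mu `^ (- C) <= _).
    by apply: ler_wpM2l; [exact: ltW|exact: powRN_le_base].
  apply: le_trans gap_numu _; rewrite ex ey -mulrBl ger0_norm.
    by rewrite ler_peMr ?exprn_ege1 ?subr_ge0 ?(ltW numu) ?(ltW q_gt1).
  by rewrite mulr_ge0 ?subr_ge0 ?(ltW numu) ?(ltW qk0).
Qed.

End gap_condition_extension.

Lemma weight_exponent_le (R : realFieldType) (C' X Y L l2 M : R) :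
  0 < C' -> 0 <= L -> 0 <= M -> 0 <= l2 ->
  Y + (M + 1) * L <= l2 + X -> X <= l2 + Y + 2 * (M + 1) * L ->
  - C' * X - Y - M * L <=
    `|(1 - C') / 2| * (l2 + 2 * L) - (C' + 1) / 2 * X - (C' + 1) / 2 * Y
      - M * (Num.min 1 C' * L).
Proof.
move=> C'0 L0 M0 l20 lo hi; have ML0 : 0 <= M * L by apply: mulr_ge0.
case: (leP 1 C') => C'1.
  rewrite ler0_norm; last by lra.
  have : (1 - C') / 2 * (X - Y) <= (1 - C') / 2 * (- l2) by rewrite ler_wnM2l; lra.
  nra.
rewrite ger0_norm; last by lra.
have : (1 - C') / 2 * (X - Y) <= (1 - C') / 2 * (l2 + 2 * (M + 1) * L).
  by rewrite ler_wpM2l; lra.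
nra.
Qed.

Section window_weight.
Variables (R : realType) (a C' : R).

Definition tau : R := (C' + 1) / 2.
Definition window_const : R := expR (ln 4 + `|(1 - C') / 2| * (ln 2 + 2 * ln a)).
Definition window_ratio : R := expR (- (Num.min 1 C' * ln a)).

(* [mu ~ nu q^(m+1)] with [q] in [[a, a^2]] pins [mu] between [nu a^(m+1)] and
   [nu a^(2m+2)]; this trades the factor [a^(-m)] against [(mu nu)^(-tau)]. *)
Lemma window_weight_bound (nu mu q : R) (m : nat) : 1 < a -> 0 < C' ->
  1 <= nu -> 1 <= mu -> a <= q -> q <= a ^+ 2 -> `|nu * q ^+ m.+1 - mu| < 1 ->
  4 * mu `^ (- C') / (nu * a ^+ m) <=
    window_const * (mu `^ (- tau) * nu `^ (- tau)) * window_ratio ^+ m.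
Proof.
move=> a1 C'0 nu1 mu1 aq qa2 near_mu.
have a0 : 0 < a by apply: lt_trans a1.
have nu0 : 0 < nu by apply: lt_le_trans nu1.
have mu0 : 0 < mu by apply: lt_le_trans mu1.
have powRE x e : 0 < x -> x `^ e = expR (e * ln x) by move=> x0; rewrite /powR gt_eqF.
have [lo hi] : nu * q ^+ m.+1 - mu < 1 /\ mu - nu * q ^+ m.+1 < 1.
  by move: near_mu; rewrite ltr_norml => /andP[]; split; lra.
have nu_lo : nu * a ^+ m.+1 <= 2 * mu.
  have : nu * a ^+ m.+1 <= nu * q ^+ m.+1.
    by rewrite ler_pM2l// lerXn2r// nnegrE ltW// (lt_le_trans a0).
  lra.
have mu_hi : mu <= 2 * (nu * (a ^+ 2) ^+ m.+1).
  have : nu * q ^+ m.+1 <= nu * (a ^+ 2) ^+ m.+1.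
    by rewrite ler_pM2l// lerXn2r// nnegrE ltW ?exprn_gt0// (lt_le_trans a0).
  have : 1 <= nu * (a ^+ 2) ^+ m.+1.
    by rewrite -(mulr1 1) ler_pM// !exprn_ege1// ltW.
  lra.
have lhsE : 4 * mu `^ (- C') / (nu * a ^+ m) =
    expR (ln 4 + (- C') * ln mu - (ln nu + m%:R * ln a)).
  by rewrite expRB !expRD -powRE// powR_mulrn ?ltW// -powRE// !lnK ?posrE.
have rhsE : window_const * (mu `^ (- tau) * nu `^ (- tau)) * window_ratio ^+ m =
    expR ((ln 4 + `|(1 - C') / 2| * (ln 2 + 2 * ln a)) + (- tau) * ln mu
      + (- tau) * ln nu + m%:R * (- (Num.min 1 C' * ln a))).
  by rewrite /window_const /window_ratio !powRE// -expRM_natl -!expRD !addrA.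
have ln_lo : ln nu + (m%:R + 1) * ln a <= ln 2 + ln mu.
  move: nu_lo; rewrite -ler_ln ?posrE ?mulr_gt0 ?exprn_gt0//.
  by rewrite !lnM ?posrE ?exprn_gt0// lnXn// natr1 mulr_natl.
have ln_hi : ln mu <= ln 2 + ln nu + 2 * (m%:R + 1) * ln a.
  move: mu_hi; rewrite -ler_ln ?posrE ?mulr_gt0 ?exprn_gt0//.
  rewrite !lnM ?posrE ?mulr_gt0 ?exprn_gt0// !lnXn ?exprn_gt0//.
  suff -> : ln a *+ 2 *+ m.+1 = 2 * (m%:R + 1) * ln a by rewrite addrA.
  by rewrite -mulrnA -[LHS]mulr_natl natrM -natr1; ring.
have := weight_exponent_le C'0 (ln_ge0 (ltW a1)) (ler0n _ m) (ln_ge0 (ler1n _ 2))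
  ln_lo ln_hi.
rewrite lhsE rhsE ler_expR /tau; lra.
Qed.

Lemma window_ratio_gt0 : 0 < window_ratio.
Proof. exact: expR_gt0. Qed.

Lemma window_ratio_lt1 : 1 < a -> 0 < C' -> window_ratio < 1.
Proof.
by move=> a1 C'0; rewrite expR_lt1 oppr_lt0 mulr_gt0 ?ln_gt0// lt_min ltr01.
Qed.

End window_weight.

Lemma negligible_small_covers d (T : measurableType d) (R : realType)
    (mu : {measure set T -> \bar R}) (A : set T) (B : nat -> set T) (S : R) :
  (forall N, measurable (B N)) -> (forall N, mu (B N) <= ((N.+1%:R)^-1 * S)%:E)%E ->
  (forall N, A `<=` B N) -> mu.-negligible A.
Proof.
move=> mB muB AB; exists (\bigcap_N B N); split.
- exact: bigcapT_measurable.
- have le_muB N : (mu (\bigcap_N B N) <= ((N.+1%:R)^-1 * S)%:E)%E.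
    apply: le_trans (muB N); apply: le_measure; rewrite ?inE//.
    + exact: bigcapT_measurable.
    + by move=> x /(_ N I).
  set m0 := mu _ in le_muB *.
  have m0_ge0 : (0 <= m0)%E by apply: measure_ge0.
  have m0_fin : m0 \is a fin_num.
    by rewrite ge0_fin_numE//; apply: le_lt_trans (le_muB 0%N) _; rewrite ltry.
  rewrite -(fineK m0_fin); congr EFin; apply/eqP; rewrite eq_le fine_ge0// andbT.
  rewrite leNgt; apply/negP => x0; set x := fine m0 in x0.
  have le_x N : x <= (N.+1%:R)^-1 * S by rewrite -lee_fin /x fineK.
  have S0 : 0 <= S by apply: le_trans (ltW x0) _; have := le_x 0%N; rewrite invr1 mul1r.
  have := archi_boundP (divr_ge0 S0 (ltW x0)).
  set N := Num.Def.archi_bound _ => ltN.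
  have := le_x N; rewrite leNgt => /negP; apply.
  rewrite mulrC ltr_pdivrMr// -ltr_pdivrMl// mulrC; apply: lt_trans ltN _.
  by rewrite ltr_nat.
- by move=> x Ax N _; exact: AB.
Qed.

Lemma dist_exprS_ge (R : realFieldType) (a x y : R) (m : nat) : 0 < a -> a <= x -> a <= y ->
  a ^+ m * `|x - y| <= `|x ^+ m.+1 - y ^+ m.+1|.
Proof.
move=> a0 ax ay; have x0 := le_trans (ltW a0) ax; have y0 := le_trans (ltW a0) ay.
have terms_ge0 (i : 'I_m) : 0 <= x ^+ (m - i.+1) * y ^+ i.+1 by rewrite mulr_ge0 ?exprn_ge0.
rewrite subrXX normrM mulrC ler_wpM2l// big_ord_recl /= subn0 expr0 mulr1.
rewrite ger0_norm ?addr_ge0 ?sumr_ge0 ?exprn_ge0//.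
by rewrite ler_wpDr ?sumr_ge0// lerXn2r// nnegrE ltW.
Qed.

Section window_negligible.
Variables (R : realType) (Q : set R) (C' a : R).
Hypotheses (bQ : beurling_system Q) (C'0 : 0 < C') (a1 : 1 < a).
Local Notation NQ := (beurling_integers Q).
Local Notation mu := (@lebesgue_measure R).

Definition tolerance (mu0 : R) (N : nat) : R := (N.+1%:R)^-1 * mu0 `^ (- C').

Definition near_set (nu mu0 : R) (m N : nat) : set R :=
  [set q | a <= q /\ q <= a ^+ 2 /\ `|nu * q ^+ m.+1 - mu0| < tolerance mu0 N].

Definition cover_radius (nu mu0 : R) (m N : nat) : R :=
  2 * tolerance mu0 N / (nu * a ^+ m).

(* A ball of radius [cover_radius] around any point of [near_set] contains it
   (see [dist_exprS_ge]), and this choice of centre avoids measurability issues. *)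
Definition cover_ball (nu mu0 : R) (m N : nat) : set R :=
  if pselect (exists q, near_set nu mu0 m N q) is left _ then
    ball (xget 0 (near_set nu mu0 m N)) (cover_radius nu mu0 m N)
  else set0.

Definition weight (nu mu0 : R) (m : nat) : R :=
  window_const a C' * (mu0 `^ (- tau C') * nu `^ (- tau C')) * window_ratio a C' ^+ m.

Definition window_index : set (R * (R * nat)) := NQ `*` (NQ `*` [set: nat]).

Lemma weight_ge0 nu mu0 m : 0 <= weight nu mu0 m.
Proof.
by rewrite !mulr_ge0 ?powR_ge0 ?exprn_ge0 ?ltW ?expR_gt0 ?window_ratio_gt0.
Qed.

Lemma cover_ball_measurable nu mu0 m N : measurable (cover_ball nu mu0 m N).
Proof. by rewrite /cover_ball; case: pselect => _ //; exact: measurable_realfun.measurable_ball. Qed.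

Lemma near_set_sub_cover_ball nu mu0 m N : 1 <= nu ->
  near_set nu mu0 m N `<=` cover_ball nu mu0 m N.
Proof.
move=> nu1 q near_q; have nu0 : 0 < nu by apply: lt_le_trans nu1.
have a0 : 0 < a by apply: lt_trans a1.
rewrite /cover_ball; case: pselect => [e|]; last by move=> []; exists q.
have [ax [xa near_x]] := xgetPex 0 e; set x := xget 0 _ in ax xa near_x *.
have [aq [qa {}near_q]] := near_q.
rewrite -ball_normE /= /cover_radius ltr_pdivlMr ?mulr_gt0 ?exprn_gt0//.
have dist_pow : nu * `|x ^+ m.+1 - q ^+ m.+1| < 2 * tolerance mu0 N.
  have -> : nu * `|x ^+ m.+1 - q ^+ m.+1| =
      `|(nu * x ^+ m.+1 - mu0) - (nu * q ^+ m.+1 - mu0)|.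
    by rewrite -{1}(ger0_norm (ltW nu0)) -normrM; congr `|_|; ring.
  by apply: le_lt_trans (ler_normB _ _) _; rewrite mulr2n mulrDl mul1r ltrD.
apply: le_lt_trans dist_pow; rewrite mulrC -mulrA ler_wpM2l ?(ltW nu0)//.
exact: dist_exprS_ge.
Qed.

Lemma cover_ball_measure nu mu0 m N : 1 <= nu -> 1 <= mu0 ->
  (mu (cover_ball nu mu0 m N) <= ((N.+1%:R)^-1 * weight nu mu0 m)%:E)%E.
Proof.
move=> nu1 mu1; have nu0 : 0 < nu by apply: lt_le_trans nu1.
have a0 : 0 < a by apply: lt_trans a1.
have N0 : 0 <= (N.+1%:R)^-1 :> R by rewrite invr_ge0.
rewrite /cover_ball; case: pselect => [e|_]; last first.
  by rewrite measure0 lee_fin mulr_ge0 ?weight_ge0.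
have [aq [qa near_q]] := xgetPex 0 e.
have tol_le1 : tolerance mu0 N <= 1.
  have pow_le1 : mu0 `^ (- C') <= 1.
    by rewrite -[leRHS](powRr0 mu0) ler_powR// oppr_le0 ltW.
  by rewrite /tolerance -[leRHS]mulr1 ler_pM ?powR_ge0// invf_le1// ler1n.
rewrite lebesgue_measure_ball ?divr_ge0 ?mulr_ge0 ?powR_ge0 ?exprn_ge0 ?(ltW nu0) ?(ltW a0)//.
have -> : cover_radius nu mu0 m N *+ 2 =
    (N.+1%:R)^-1 * (4 * mu0 `^ (- C') / (nu * a ^+ m)).
  by rewrite /cover_radius /tolerance mulr2n; field; rewrite !gt_eqF ?exprn_gt0.
rewrite lee_fin ler_wpM2l//.
exact: window_weight_bound (lt_le_trans near_q tol_le1).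
Qed.

Hypothesis zeta_tau_finite : (\esum_(x in NQ) (x `^ (- tau C'))%:E < +oo)%E.

Lemma esum_weight_finite :
  exists S : R, (\esum_(i in window_index) (weight i.1 i.2.1 i.2.2)%:E <= S%:E)%E.
Proof.
pose A := \esum_(x in NQ) (x `^ (- tau C'))%:E.
have A_ge0 : (0 <= A)%E by apply: esum_ge0 => x _; rewrite lee_fin powR_ge0.
have A_fin : A = (fine A)%:E by rewrite fineK// ge0_fin_numE.
set t := tau C'; set K := window_const a C'; set rho := window_ratio a C'.
have K_ge0 : 0 <= K by rewrite ltW ?expR_gt0.
have rho_ge0 : 0 <= rho by rewrite ltW ?window_ratio_gt0.
have inv_1_sub_rho_ge0 : 0 <= (1 - rho)^-1 by rewrite invr_ge0 subr_ge0 ltW ?window_ratio_lt1.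
have esum_NQ c : 0 <= c -> (\esum_(x in NQ) (c * x `^ (- t))%:E <= (c * fine A)%:E)%E.
  move=> c0; under eq_esum do rewrite EFinM.
  apply: le_trans (esumZl_le c0 _) _; first by move=> x _; rewrite lee_fin powR_ge0.
  by rewrite EFinM -A_fin.
exists (K * fine A / (1 - rho) * fine A).
have weight_ge0E nu mu0 m : (0 <= (weight nu mu0 m)%:E)%E by rewrite lee_fin weight_ge0.
have -> : \esum_(i in window_index) (weight i.1 i.2.1 i.2.2)%:E =
    \esum_(nu in NQ) \esum_(j in NQ `*` [set: nat]) (weight nu j.1 j.2)%:E.
  by rewrite esum_esum.
apply: le_trans (esum_NQ _ _); last by rewrite !mulr_ge0 ?fine_ge0.
apply: le_esum => nu NQnu.
have -> : \esum_(j in NQ `*` [set: nat]) (weight nu j.1 j.2)%:E =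
    \esum_(mu0 in NQ) \esum_(m in [set: nat]) (weight nu mu0 m)%:E.
  by rewrite esum_esum.
have -> : K * fine A / (1 - rho) * nu `^ (- t) = fine A * (K * nu `^ (- t) / (1 - rho)).
  by rewrite mulrC; ring.
rewrite mulrC; apply: le_trans (esum_NQ _ _); last by rewrite !mulr_ge0 ?powR_ge0.
apply: le_esum => mu0 NQmu0; rewrite /weight -/t -/K -/rho.
have c_ge0 : 0 <= K * (mu0 `^ (- t) * nu `^ (- t)) by rewrite !mulr_ge0 ?powR_ge0.
under eq_esum do rewrite EFinM.
apply: le_trans (esumZl_le c_ge0 _) _; first by move=> m _; rewrite lee_fin exprn_ge0.
apply: le_trans (lee_wpmul2l _ (esum_geometric_le _)) _.
- by rewrite lee_fin.
- by rewrite window_ratio_gt0 window_ratio_lt1.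
- by rewrite -EFinM lee_fin le_eqVlt -/t; apply/orP; left; apply/eqP; ring.
Qed.

Lemma window_not_badly_approximable_negligible :
  mu.-negligible [set q | a <= q /\ q <= a ^+ 2 /\ ~ badly_approximable Q C' q].
Proof.
have [S le_S] := esum_weight_finite.
have [Q_gt1 _ _] := bQ.
pose B N := \bigcup_(i in window_index) cover_ball i.1 i.2.1 i.2.2 N.
have cover_B N : measurable (B N) /\ (mu (B N) <= ((N.+1%:R)^-1 * S)%:E)%E.
  have index_countable : countable window_index.
    by apply: countableX (beurling_integers_countable bQ) _;
      apply: countableX (beurling_integers_countable bQ) (countableP _).
  have [mB le_muB] := measure_countable_bigcup mu index_countable
    (fun i _ => cover_ball_measurable i.1 i.2.1 i.2.2 N).
  split => //; apply: le_trans le_muB _.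
  have N_ge0 : 0 <= (N.+1%:R)^-1 :> R by rewrite invr_ge0.
  apply: le_trans (_ : \esum_(i in window_index)
      ((N.+1%:R)^-1%:E * (weight i.1 i.2.1 i.2.2)%:E) <= _)%E.
    apply: le_esum => -[nu [mu0 m]] [/= NQnu [NQmu0 _]]; rewrite -EFinM.
    exact: cover_ball_measure (beurling_integers_ge1 Q_gt1 NQnu)
      (beurling_integers_ge1 Q_gt1 NQmu0).
  apply: le_trans (esumZl_le N_ge0 _) _; first by move=> i _; rewrite lee_fin weight_ge0.
  by rewrite EFinM lee_wpmul2l// lee_fin.
have := negligible_small_covers (mu := mu) (fun N => (cover_B N).1) (fun N => (cover_B N).2).
apply=> N q [aq [qa not_approx]]; apply: contrapT => not_Bq; apply: not_approx.
exists (N.+1%:R)^-1; first by rewrite invr_gt0.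
move=> nu mu0 m NQnu NQmu0; rewrite leNgt; apply/negP => close; apply: not_Bq.
exists (nu, (mu0, m)) => //.
exact: near_set_sub_cover_ball (beurling_integers_ge1 Q_gt1 NQnu) _ (conj aq (conj qa close)).
Qed.

End window_negligible.

Lemma window_cover (R : realType) (q : R) : 1 < q ->
  (exists n : nat, 1 + (n.+1%:R)^-1 <= q /\ q <= (1 + (n.+1%:R)^-1) ^+ 2) \/
  (exists n : nat, n.+2%:R <= q /\ q <= n.+2%:R ^+ 2).
Proof.
move=> q1; have [q2|q2] := leP q 2.
  left; set y := (q - 1)^-1.
  have y0 : 0 <= y by rewrite invr_ge0 subr_ge0 ltW.
  have /andP[n_le n_gt] := truncn_itv y0.
  set n := Num.Def.truncn y in n_le n_gt.
  exists n; set u := n.+1%:R : R.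
  have u0 : 0 < u by rewrite ltr0n.
  have q10 : 0 < q - 1 by rewrite subr_gt0.
  have u_gt : 1 < u * (q - 1) by rewrite -ltr_pdivrMr// div1r.
  have u_le : u * (q - 1) <= 2.
    have : n%:R * (q - 1) <= 1 by rewrite -ler_pdivlMr// div1r.
    by rewrite /u -natr1 mulrDl mul1r; lra.
  set t := u^-1.
  have tu : t * u = 1 by rewrite mulVf// gt_eqF.
  have t0 : 0 < t by rewrite invr_gt0.
  by split; nra.
right; have q0 : 0 <= q by rewrite (le_trans _ (ltW q2)).
have T2 : (2 <= Num.Def.truncn q)%N by rewrite truncn_ge_nat// ltW.
have /andP[T_le T_gt] := truncn_itv q0.
exists (Num.Def.truncn q - 2)%N; rewrite -addn2 subnK//; split => //.
apply: le_trans (ltW T_gt) _; have : (2 : R) <= (Num.Def.truncn q)%:R by rewrite ler_nat.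
by rewrite -natr1; nra.
Qed.

Lemma sigma_c_lt_tau (R : realType) (sg : \bar R) (C eps : R) : 0 < eps -> (sg < +oo)%E ->
  let C' := fine (Order.max C%:E (2%:E * sg - 1%:E + eps%:E)%E) in
  C <= C' /\ (sg < (tau C')%:E)%E.
Proof.
move=> eps0; case: sg => [r| |] //= _; last first.
  by rewrite mulrNy gtr0_sg// mul1e !addNye maxeNy /= ltNyr.
have -> : (2%:E * r%:E - 1%:E + eps%:E)%E = (2 * r - 1 + eps)%:E by [].
have [le_C|lt_C] := leP C (2 * r - 1 + eps).
  by rewrite max_r ?lee_fin//=; split => //; rewrite lte_fin /tau; lra.
rewrite max_l /=; last by rewrite lee_fin ltW.
by split => //; rewrite lte_fin /tau; lra.
Qed.

Section exceptional_sets.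
Variables (R : realType) (Q : set R).
Hypothesis bQ : beurling_system Q.
Local Notation mu := (@lebesgue_measure R).

Lemma esum_powRN_finite (s : R) : (sigma_c Q < s%:E)%E ->
  (\esum_(x in beurling_integers Q) (x `^ (- s))%:E < +oo)%E.
Proof.
have [Q_gt1 _ _] := bQ.
move=> /ereal_inf_lt[_ [s' finite_s' <-]]; rewrite lte_fin => s's.
apply: le_lt_trans finite_s'; apply: le_esum => x NQx; rewrite lee_fin.
by rewrite ler_powR ?lerN2 ?(ltW s's) ?(beurling_integers_ge1 Q_gt1 NQx).
Qed.

Lemma exp_rat_log_span_negligible : mu.-negligible (exp_rat_log_span Q).
Proof.
have span_countable := exp_rat_log_span_countable bQ.
exists (exp_rat_log_span Q); split => //; last exact: countable_lebesgue_measure0.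
apply: countable_measurable span_countable => t.
by rewrite -set_itv1; exact: measurable_itv.
Qed.

Lemma not_badly_approximable_negligible (C' : R) : 0 < C' -> (sigma_c Q < (tau C')%:E)%E ->
  mu.-negligible [set q | 1 < q /\ ~ badly_approximable Q C' q].
Proof.
move=> C'0 /esum_powRN_finite zeta_finite.
have window_null a : 1 < a -> mu.-negligible
    [set q | a <= q /\ q <= a ^+ 2 /\ ~ badly_approximable Q C' q].
  by move=> a1; exact: window_not_badly_approximable_negligible.
have small_null : mu.-negligible (\bigcup_n
    [set q | 1 + n.+1%:R^-1 <= q /\ q <= (1 + n.+1%:R^-1) ^+ 2 /\ ~ badly_approximable Q C' q]).
  by apply: negligible_bigcup => n; apply: window_null; rewrite ltrDl invr_gt0.
have large_null : mu.-negligible (\bigcup_n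
    [set q | n.+2%:R <= q /\ q <= n.+2%:R ^+ 2 /\ ~ badly_approximable Q C' q]).
  by apply: negligible_bigcup => n; apply: window_null; rewrite ltr1n.
apply: negligibleS (negligibleU small_null large_null) => q [/window_cover[]] [n [aq qa]] ?.
- by left; exists n.
- by right; exists n.
Qed.

End exceptional_sets.

Theorem lemma2p1 (R : realType) (Q : set R) (c C : R) :
  beurling_system Q ->
  (sigma_c Q < +oo)%E ->
  0 < c -> 0 < C ->
  gap_condition Q c C ->
  forall eps : R, 0 < eps ->
  {ae (@lebesgue_measure R), forall q' : R, 1 < q' ->
     beurling_system (Q `|` [set q']) /\
     exists2 c' : R, 0 < c' &
       gap_condition (Q `|` [set q']) c'
         (fine (Order.max C%:E (2%:E * sigma_c Q - 1%:E + eps%:E)%E))}.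
Proof.
move=> bQ sigma_finite c0 C0 gQ eps eps0.
have [CC' sigma_lt_tau] := sigma_c_lt_tau C eps0 sigma_finite.
set C' := fine _ in CC' sigma_lt_tau *.
have C'0 : 0 < C' by apply: lt_le_trans CC'.
have [Q_gt1 _ _] := bQ.
apply: negligibleS (negligibleU (exp_rat_log_span_negligible bQ)
  (not_badly_approximable_negligible bQ C'0 sigma_lt_tau)).
move=> q /= /not_implyP[q1 not_good]; apply: contrapT => not_exceptional.
apply: not_good; split.
  by apply: beurling_systemU1 => // in_span; apply: not_exceptional; left.
have [d d0 d_sep] : badly_approximable Q C' q.
  by apply: contrapT => not_approx; apply: not_exceptional; right.
exists (Num.min c d); first by rewrite lt_min c0 d0.
exact (gap_conditionU1 Q_gt1 q1 (ltW C'0) d_sep c0 d0 (ltW C0) CC' gQ).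
Qed.
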